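(* Consider the averaged Ćuk converter $$-L_1\dot I_1=(1-u)V_1-V_s,\quad -L_2\dot I_2=uV_1+V_2,\quad C_1\dot V_1=(1-u)I_1+uI_2,\quad C_2\dot V_2=I_2-GV_2,$$ with scalar constants $L_1,L_2,C_1,C_2>0$, $G\ge0$, $V_s\in\mathbb{R}$, extended by $\dot u=\upsilon$. Let $I=(I_1,I_2)$, $V=(V_1,V_2)$, $L=\mathrm{diag}(L_1,L_2)$, $C=\mathrm{diag}(C_1,C_2)$. Then this system is passive with respect to the storage function $S=\tfrac12\dot I^\top L\dot I+\tfrac12\dot V^\top C\dot V$ and the port-variables $\dot u$ and $y=\dot V_1(I_2-I_1)-V_1(\dot I_2-\dot I_1)$, i.e. $\dot S\le\dot u\,y$.
   Context: $I_1,I_2$ are inductor currents, $V_1,V_2$ capacitor voltages, $u\in[0,1]$ the duty cycle (averaged model). *)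

From Stdlib Require Import Reals.
From Coquelicot Require Import Coquelicot.
Open Scope R_scope.

Definition cuk_storage (L1 L2 C1 C2 : R) (I1 I2 V1 V2 : R -> R) (t : R) : R :=
  / 2 * (L1 * (Derive I1 t) ^ 2 + L2 * (Derive I2 t) ^ 2)
  + / 2 * (C1 * (Derive V1 t) ^ 2 + C2 * (Derive V2 t) ^ 2).

Definition cuk_output (I1 I2 V1 : R -> R) (t : R) : R :=
  Derive V1 t * (I2 t - I1 t) - V1 t * (Derive I2 t - Derive I1 t).

(** Differentiating the four circuit equations in time gives the "incremental"
    model, in which the derivatives (İ, V̇) obey the same interconnection as
    (I, V), driven by u̇.  The storage S is the energy of that incremental
    circuit; the lossless interconnection cancels in Ṡ, which leaves
    Ṡ = u̇ y - G V̇₂², and the conductance term has the right sign. *)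

From Stdlib Require Import Reals Lra.
From Coquelicot Require Import Coquelicot.
Open Scope R_scope.

(* [auto_derive] leaves eta-expanded functions [fun x => f x] behind, which
   [rewrite] and [ring] do not identify with [f]. *)
Ltac eta_contract :=
  repeat match goal with
         | |- context [fun x : R => ?f x] => change (fun x : R => f x) with f
         end.

Lemma cuk_power_balance (L1 L2 C1 C2 G u du I1 I2 V1 dI1 dI2 dV1 dV2
    ddI1 ddI2 ddV1 ddV2 : R) :
  - L1 * ddI1 = - du * V1 + (1 - u) * dV1 ->
  - L2 * ddI2 = du * V1 + u * dV1 + dV2 ->
  C1 * ddV1 = du * (I2 - I1) + (1 - u) * dI1 + u * dI2 ->
  C2 * ddV2 = dI2 - G * dV2 ->
  L1 * dI1 * ddI1 + L2 * dI2 * ddI2 + C1 * dV1 * ddV1 + C2 * dV2 * ddV2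
  = du * (dV1 * (I2 - I1) - V1 * (dI2 - dI1)) - G * dV2 ^ 2.
Proof.
  intros e1 e2 e3 e4.
  replace (L1 * dI1 * ddI1 + L2 * dI2 * ddI2 + C1 * dV1 * ddV1 + C2 * dV2 * ddV2)
    with (- dI1 * (- L1 * ddI1) - dI2 * (- L2 * ddI2)
          + dV1 * (C1 * ddV1) + dV2 * (C2 * ddV2)) by ring.
  rewrite e1, e2, e3, e4; ring.
Qed.

Lemma is_derive_Derive_scaled (f g : R -> R) (c t l : R) :
  c <> 0 -> (forall s, c * Derive f s = g s) -> is_derive g t l ->
  is_derive (Derive f) t (l / c).
Proof.
  intros Hc Hf Hg.
  assert (Hfg : forall s, / c * g s = Derive f s).
  { intro s; rewrite <- Hf; field; exact Hc. }
  apply (is_derive_ext _ _ _ _ Hfg).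
  replace (l / c) with (/ c * l) by (unfold Rdiv; ring).
  now apply is_derive_scal.
Qed.

Lemma is_derive_storage (L1 L2 C1 C2 : R) (I1 I2 V1 V2 : R -> R)
    (t ddI1 ddI2 ddV1 ddV2 : R) :
  is_derive (Derive I1) t ddI1 -> is_derive (Derive I2) t ddI2 ->
  is_derive (Derive V1) t ddV1 -> is_derive (Derive V2) t ddV2 ->
  is_derive (cuk_storage L1 L2 C1 C2 I1 I2 V1 V2) t
    (L1 * Derive I1 t * ddI1 + L2 * Derive I2 t * ddI2
     + C1 * Derive V1 t * ddV1 + C2 * Derive V2 t * ddV2).
Proof.
  intros h1 h2 h3 h4; unfold cuk_storage.
  auto_derive.
  - repeat split; eexists; eassumption.
  - eta_contract.
    rewrite (is_derive_unique _ _ _ h1), (is_derive_unique _ _ _ h2),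
      (is_derive_unique _ _ _ h3), (is_derive_unique _ _ _ h4).
    field.
Qed.

Section CukTrajectory.

Variables (L1 L2 C1 C2 G Vs : R) (I1 I2 V1 V2 u : R -> R).
Hypotheses (HL1 : L1 <> 0) (HL2 : L2 <> 0) (HC1 : C1 <> 0) (HC2 : C2 <> 0).
Hypotheses (dI1 : forall t, ex_derive I1 t) (dI2 : forall t, ex_derive I2 t)
  (dV1 : forall t, ex_derive V1 t) (dV2 : forall t, ex_derive V2 t)
  (du : forall t, ex_derive u t).
Hypotheses
  (E1 : forall t, - L1 * Derive I1 t = (1 - u t) * V1 t - Vs)
  (E2 : forall t, - L2 * Derive I2 t = u t * V1 t + V2 t)
  (E3 : forall t, C1 * Derive V1 t = (1 - u t) * I1 t + u t * I2 t)
  (E4 : forall t, C2 * Derive V2 t = I2 t - G * V2 t).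

Lemma cuk_storage_rate (t : R) :
  is_derive (cuk_storage L1 L2 C1 C2 I1 I2 V1 V2) t
    (Derive u t * cuk_output I1 I2 V1 t - G * Derive V2 t ^ 2).
Proof.
  set (ddI1 := (- Derive u t * V1 t + (1 - u t) * Derive V1 t) / - L1).
  set (ddI2 := (Derive u t * V1 t + u t * Derive V1 t + Derive V2 t) / - L2).
  set (ddV1 := (Derive u t * (I2 t - I1 t) + (1 - u t) * Derive I1 t
                + u t * Derive I2 t) / C1).
  set (ddV2 := (Derive I2 t - G * Derive V2 t) / C2).
  assert (h1 : is_derive (Derive I1) t ddI1).
  { apply (is_derive_Derive_scaled _ _ _ _ _ (Ropp_neq_0_compat _ HL1) E1).
    auto_derive; [repeat split; auto | eta_contract; ring]. }
  assert (h2 : is_derive (Derive I2) t ddI2).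
  { apply (is_derive_Derive_scaled _ _ _ _ _ (Ropp_neq_0_compat _ HL2) E2).
    auto_derive; [repeat split; auto | eta_contract; ring]. }
  assert (h3 : is_derive (Derive V1) t ddV1).
  { apply (is_derive_Derive_scaled _ _ _ _ _ HC1 E3).
    auto_derive; [repeat split; auto | eta_contract; ring]. }
  assert (h4 : is_derive (Derive V2) t ddV2).
  { apply (is_derive_Derive_scaled _ _ _ _ _ HC2 E4).
    auto_derive; [repeat split; auto | eta_contract; ring]. }
  unfold cuk_output; rewrite <- (cuk_power_balance L1 L2 C1 C2 G (u t)
    (Derive u t) (I1 t) (I2 t) (V1 t) _ _ _ _ ddI1 ddI2 ddV1 ddV2).
  - exact (is_derive_storage _ _ _ _ _ _ _ _ _ _ _ _ _ h1 h2 h3 h4).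
  - unfold ddI1; field; exact HL1.
  - unfold ddI2; field; exact HL2.
  - unfold ddV1; field; exact HC1.
  - unfold ddV2; field; exact HC2.
Qed.

End CukTrajectory.

Theorem lemma6 (L1 L2 C1 C2 G Vs : R)
  (HL1 : 0 < L1) (HL2 : 0 < L2) (HC1 : 0 < C1) (HC2 : 0 < C2) (HG : 0 <= G)
  (I1 I2 V1 V2 u : R -> R)
  (dI1 : forall t, ex_derive I1 t) (dI2 : forall t, ex_derive I2 t)
  (dV1 : forall t, ex_derive V1 t) (dV2 : forall t, ex_derive V2 t)
  (du : forall t, ex_derive u t)
  (hu : forall t, 0 <= u t <= 1)
  (E1 : forall t, - L1 * Derive I1 t = (1 - u t) * V1 t - Vs)
  (E2 : forall t, - L2 * Derive I2 t = u t * V1 t + V2 t)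
  (E3 : forall t, C1 * Derive V1 t = (1 - u t) * I1 t + u t * I2 t)
  (E4 : forall t, C2 * Derive V2 t = I2 t - G * V2 t) :
  forall t,
    ex_derive (cuk_storage L1 L2 C1 C2 I1 I2 V1 V2) t /\
    Derive (cuk_storage L1 L2 C1 C2 I1 I2 V1 V2) t
      <= Derive u t * cuk_output I1 I2 V1 t.
Proof.
  intro t.
  assert (rate := cuk_storage_rate L1 L2 C1 C2 G Vs I1 I2 V1 V2 u
    ltac:(lra) ltac:(lra) ltac:(lra) ltac:(lra)
    dI1 dI2 dV1 dV2 du E1 E2 E3 E4 t).
  split.
  - eexists; exact rate.
  - rewrite (is_derive_unique _ _ _ rate).
    assert (loss : 0 <= G * Derive V2 t ^ 2)
      by (apply Rmult_le_pos; [exact HG | apply pow2_ge_0]).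
    lra.
Qed.
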